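(* Let $A=(a_{ij}) \in \mathbb{R}^{m\times r}$, $B=(b_{ij}) \in \mathbb{R}^{r\times n}$, let $S \subseteq \mathbb{R}^n$ be an arbitrary subset, and for $\kappa\in\mathbb{R}^r_+$ let $f_\kappa\colon \mathbb{R}^n_+\to\mathbb{R}^m$, $f_\kappa(x)=A_\kappa\, x^B$. The following statements are equivalent: (inj) $f_\kappa$ is injective with respect to $S$, for all $\kappa \in \mathbb{R}^r_+$. (jac) $\ker(J_{f_\kappa}(x)) \cap S^* = \emptyset$ for all $\kappa \in \mathbb{R}^r_+$ and $x \in \mathbb{R}^n_+$, where $J_{f_\kappa}(x)$ is the Jacobian matrix of $f_\kappa$ at $x$. (lin) $\ker(A_\kappa B_\lambda) \cap S^* = \emptyset$ for all $\kappa \in \mathbb{R}^r_+$ and $\lambda\in \mathbb{R}^n_+$. (sig) $\sigma(\ker(A)) \cap \sigma(B(\Sigma(S^* ))) = \emptyset$.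
   Context: $\mathbb{R}_+$ denotes the strictly positive reals. For $x\in\mathbb{R}^n_+$ and $B\in\mathbb{R}^{r\times n}$ with rows $b_1,\dots,b_r$, $x^B\in\mathbb{R}^r_+$ is the vector with $(x^B)_j = x^{b_j}=x_1^{b_{j1}}\cdots x_n^{b_{jn}}$ (real exponents allowed). For $\kappa\in\mathbb{R}^r_+$, $A_\kappa = A\,\mathrm{diag}(\kappa)$; for $\lambda\in\mathbb{R}^n_+$, $B_\lambda = B\,\mathrm{diag}(\lambda)$. A function $g$ defined on $\Omega\subseteq\mathbb{R}^n$ is injective with respect to $S\subseteq\mathbb{R}^n$ if $x,y\in\Omega$, $x\neq y$, $x-y\in S$ imply $g(x)\neq g(y)$ (here $\Omega=\mathbb{R}^n_+$). For $x\in\mathbb{R}^n$, $\sigma(x)\in\{-,0,+\}^n$ is the componentwise sign; for $S\subseteq\mathbb{R}^n$, $\sigma(S)=\{\sigma(x)\mid x\in S\}$, $\Sigma(S)=\sigma^{-1}(\sigma(S))$ (the set of all vectors having the sign vector of some element of $S$), and $S^*=S\setminus\{0\}$. A matrix $B$ is identified with the linear map $x\mapsto Bx$, and $B(S)=\{Bx\mid x\in S\}$. *)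

From mathcomp Require Import ssreflect ssrbool eqtype ssrnat seq fintype.
From Stdlib Require Import Reals ROrderedType.
Open Scope R_scope.
Set Implicit Arguments.
Unset Strict Implicit.

Definition sumI (n : nat) (F : 'I_n -> R) : R :=
  foldr (fun i acc => F i + acc) 0 (enum 'I_n).
Definition prodI (n : nat) (F : 'I_n -> R) : R :=
  foldr (fun i acc => F i * acc) 1 (enum 'I_n).

Definition posvec (n : nat) (x : 'I_n -> R) : Prop := forall i, 0 < x i.

Definition zerov (n : nat) : 'I_n -> R := fun _ => 0.
Definition subv (n : nat) (x y : 'I_n -> R) : 'I_n -> R := fun i => x i - y i.

Definition mulmv (p q : nat) (M : 'I_p -> 'I_q -> R) (v : 'I_q -> R) : 'I_p -> R :=
  fun i => sumI (fun k => M i k * v k).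
Definition mulmm (p q s : nat) (M : 'I_p -> 'I_q -> R) (N : 'I_q -> 'I_s -> R)
  : 'I_p -> 'I_s -> R := fun i k => sumI (fun j => M i j * N j k).
Definition scalecols (p q : nat) (M : 'I_p -> 'I_q -> R) (d : 'I_q -> R)
  : 'I_p -> 'I_q -> R := fun i j => M i j * d j.

Definition monomials (r n : nat) (B : 'I_r -> 'I_n -> R) (x : 'I_n -> R) : 'I_r -> R :=
  fun j => prodI (fun k => Rpower (x k) (B j k)).

Definition fk (m r n : nat) (A : 'I_m -> 'I_r -> R) (B : 'I_r -> 'I_n -> R)
  (kappa : 'I_r -> R) (x : 'I_n -> R) : 'I_m -> R :=
  mulmv (scalecols A kappa) (monomials B x).

Definition injective_wrt (m n : nat) (g : ('I_n -> R) -> ('I_m -> R))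
  (S : ('I_n -> R) -> Prop) : Prop :=
  forall x y, posvec x -> posvec y -> x <> y -> S (subv x y) -> g x <> g y.

Definition upd (n : nat) (x : 'I_n -> R) (k : 'I_n) (t : R) : 'I_n -> R :=
  fun l => if l == k then t else x l.

Definition is_jacobian (m n : nat) (g : ('I_n -> R) -> ('I_m -> R))
  (x : 'I_n -> R) (J : 'I_m -> 'I_n -> R) : Prop :=
  forall i k, derivable_pt_lim (fun t => g (upd x k t) i) (x k) (J i k).

Definition ker_avoids (p q : nat) (M : 'I_p -> 'I_q -> R)
  (S : ('I_q -> R) -> Prop) : Prop :=
  forall v, S v -> v <> (@zerov q) -> mulmv M v <> (@zerov p).

(* sign and sign vectors; Lt = -, Eq = 0, Gt = + *)
Definition sgnR (a : R) : comparison := Rcompare a 0.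
Definition signvec (n : nat) (v : 'I_n -> R) : 'I_n -> comparison := fun i => sgnR (v i).

Definition Sigma_set (n : nat) (T : ('I_n -> R) -> Prop) : ('I_n -> R) -> Prop :=
  fun v => exists w, T w /\ signvec v = signvec w.

Definition nonzero_part (n : nat) (S : ('I_n -> R) -> Prop) : ('I_n -> R) -> Prop :=
  fun v => S v /\ v <> (@zerov n).

From mathcomp Require Import ssreflect ssrfun ssrbool eqtype ssrnat seq fintype.
From Stdlib Require Import Reals ROrderedType Lra FunctionalExtensionality.
Open Scope R_scope.
Set Implicit Arguments.
Unset Strict Implicit.

(* All three of (inj), (jac), (lin) are compared with the sign condition (sig),
   reformulated as the absence of a "sign witness": vectors u, v, w with A u = 0,
   w in S^*, sigma(v) = sigma(w) and sigma(B v) = sigma(u).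
   - (lin) <-> (sig): two vectors with equal sign vectors differ by a positive
     diagonal scaling, so A_kappa B_lambda w = A (kappa o B (lambda o w)) = 0
     with w in S^* is exactly a sign witness.
   - (inj) <-> (sig): writing x^B = exp (B ln x), the differences
     f_kappa x - f_kappa y = A (kappa o (x^B - y^B)) and x - y have the sign
     patterns of B (ln x - ln y) and ln x - ln y, since exp and ln are increasing;
     conversely any pair (w, v) with equal sign vectors is realised as
     (x - y, ln x - ln y) for suitable positive x, y.
   - (jac) <-> (lin): the Jacobian is J_{f_kappa}(x) = A_{kappa o x^B} B_{1/x}, and
     (kappa, x) |-> (kappa o x^B, 1/x) maps the positive orthants onto themselves. *)

Lemma sgnR_neg a : a < 0 -> sgnR a = Lt.
Proof. by rewrite /sgnR => ha; case: Rcompare_spec => h //; lra. Qed.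

Lemma sgnR_zero a : a = 0 -> sgnR a = Eq.
Proof. by rewrite /sgnR => ha; case: Rcompare_spec => h //; lra. Qed.

Lemma sgnR_pos a : 0 < a -> sgnR a = Gt.
Proof. by rewrite /sgnR => ha; case: Rcompare_spec => h //; lra. Qed.

Lemma sgnR_eq a b :
  (a < 0 -> b < 0) -> (a = 0 -> b = 0) -> (0 < a -> 0 < b) -> sgnR a = sgnR b.
Proof.
move=> hneg hzero hpos; case: (Rtotal_order a 0) => [h|[h|h]].
- by rewrite (sgnR_neg h) (sgnR_neg (hneg h)).
- by rewrite (sgnR_zero h) (sgnR_zero (hzero h)).
- by rewrite (sgnR_pos h) (sgnR_pos (hpos h)).
Qed.

Lemma sgnR_cases a b : sgnR a = sgnR b ->
  (a < 0 /\ b < 0) \/ (a = 0 /\ b = 0) \/ (0 < a /\ 0 < b).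
Proof.
case: (Rtotal_order a 0) => [h|[h|h]]; case: (Rtotal_order b 0) => [h'|[h'|h']];
  rewrite ?(sgnR_neg h) ?(sgnR_zero h) ?(sgnR_pos h)
          ?(sgnR_neg h') ?(sgnR_zero h') ?(sgnR_pos h') => // _; lra.
Qed.

Lemma sgnR_scale_pos c a : 0 < c -> sgnR (c * a) = sgnR a.
Proof. by move=> hc; apply: sgnR_eq => h; nra. Qed.

Lemma sgnR_diff_increasing (D : R -> Prop) (f : R -> R) a b :
  (forall s t, D s -> D t -> s < t -> f s < f t) -> D a -> D b ->
  sgnR (f a - f b) = sgnR (a - b).
Proof.
move=> incr ha hb; symmetry; apply: sgnR_eq => h.
- by have := incr _ _ ha hb ltac:(lra); lra.
- by rewrite (_ : a = b); [ring | lra].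
- by have := incr _ _ hb ha ltac:(lra); lra.
Qed.

Lemma sgnR_exp_diff a b : sgnR (exp a - exp b) = sgnR (a - b).
Proof. by apply: (@sgnR_diff_increasing (fun _ => True)) => // s t _ _; apply: exp_increasing. Qed.

Lemma sgnR_ln_diff a b : 0 < a -> 0 < b -> sgnR (ln a - ln b) = sgnR (a - b).
Proof. by apply: (@sgnR_diff_increasing (Rlt 0)) => s t hs _; apply: ln_increasing. Qed.

Definition ratio (a b : R) : R := if Req_EM_T a 0 then 1 else b / a.

Lemma ratio_pos a b : sgnR a = sgnR b -> 0 < ratio a b.
Proof.
rewrite /ratio => hab; case: (Req_EM_T a 0) => ha /=; first lra.
case: (sgnR_cases hab) => [[h1 h2]|[[h1 h2]|[h1 h2]]]; try lra.
- have -> : b / a = (- b) / (- a) by field.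
  by apply: Rdiv_lt_0_compat; lra.
- by apply: Rdiv_lt_0_compat.
Qed.

Lemma ratio_mul a b : sgnR a = sgnR b -> ratio a b * a = b.
Proof.
rewrite /ratio => hab; case: (Req_EM_T a 0) => ha /=.
- by case: (sgnR_cases hab); lra.
- by field.
Qed.

Lemma signvec_at n (a b : 'I_n -> R) i : signvec a = signvec b -> sgnR (a i) = sgnR (b i).
Proof. by move=> e; have := f_equal (fun s => s i) e. Qed.

Lemma signvec_scale_pos n (c a : 'I_n -> R) :
  posvec c -> signvec (fun i => c i * a i) = signvec a.
Proof. by move=> hc; apply: functional_extensionality => i; apply: sgnR_scale_pos. Qed.

Lemma signvec_eq_scale n (a b : 'I_n -> R) :
  signvec a = signvec b -> exists c, posvec c /\ (fun i => c i * a i) = b.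
Proof.
move=> hab; exists (fun i => ratio (a i) (b i)); split.
- by move=> i; apply/ratio_pos/signvec_at.
- by apply: functional_extensionality => i; apply/ratio_mul/signvec_at.
Qed.

(* If w and v have the same sign vector, then w = x - y and v = ln x - ln y for some
   positive x, y: take y_i = w_i / (exp v_i - 1) and x_i = exp v_i * y_i. *)
Lemma signvec_eq_log_pair n (w v : 'I_n -> R) :
  signvec w = signvec v ->
  exists x y, posvec x /\ posvec y /\ subv x y = w /\ (fun i => ln (x i) - ln (y i)) = v.
Proof.
move=> hwv.
have hsgn i : sgnR (exp (v i) - 1) = sgnR (w i).
{ by rewrite -exp_0 sgnR_exp_diff Rminus_0_r (signvec_at i hwv). }
pose y i := ratio (exp (v i) - 1) (w i).
have hy : posvec y by move=> i; apply: ratio_pos.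
exists (fun i => exp (v i) * y i), y; split; last split; last split.
- by move=> i; apply: Rmult_lt_0_compat; [apply: exp_pos | apply: hy].
- exact: hy.
- apply: functional_extensionality => i; rewrite /subv -[RHS](ratio_mul (hsgn i)) /y; ring.
- apply: functional_extensionality => i; rewrite ln_mult ?ln_exp; [ring | apply: exp_pos | apply: hy].
Qed.

(* Finite sums over an arbitrary list of indices; sumI is the sum over enum 'I_n.
   Lists (rather than ordinals) make exchanging double sums straightforward. *)
Definition lsum {T : Type} (s : seq T) (F : T -> R) : R :=
  foldr (fun i acc => F i + acc) 0 s.

Lemma sumI_lsum n (F : 'I_n -> R) : sumI F = lsum (enum 'I_n) F.
Proof. by []. Qed.

Lemma lsum_ext T (s : seq T) F G : (forall i, F i = G i) -> lsum s F = lsum s G.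
Proof. by move=> h; elim: s => //= a s IH; rewrite h IH. Qed.

Lemma lsum_zero T (s : seq T) : lsum s (fun _ => 0) = 0.
Proof. by elim: s => /= [|a s ->]; ring. Qed.

Lemma lsum_add T (s : seq T) F G : lsum s (fun i => F i + G i) = lsum s F + lsum s G.
Proof. by elim: s => /= [|a s ->]; ring. Qed.

Lemma lsum_sub T (s : seq T) F G : lsum s (fun i => F i - G i) = lsum s F - lsum s G.
Proof. by elim: s => /= [|a s ->]; ring. Qed.

Lemma lsum_mull T (s : seq T) c F : lsum s (fun i => c * F i) = c * lsum s F.
Proof. by elim: s => /= [|a s ->]; ring. Qed.

Lemma lsum_mulr T (s : seq T) c F : lsum s F * c = lsum s (fun i => F i * c).
Proof. by elim: s => /= [|a s <-]; ring. Qed.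

Lemma lsum_swap T U (s : seq T) (t : seq U) F :
  lsum s (fun i => lsum t (F i)) = lsum t (fun j => lsum s (fun i => F i j)).
Proof. by elim: s => /= [|a s IH]; rewrite ?lsum_zero // lsum_add IH. Qed.

Lemma lsum_delta (T : eqType) (s : seq T) k F : uniq s ->
  lsum s (fun l => if l == k then F l else 0) = if k \in s then F k else 0.
Proof.
elim: s => //= a s IH /andP [ha hu]; rewrite IH // in_cons.
case: (eqVneq a k) => [<-|_] /=; last ring.
by rewrite (negbTE ha); ring.
Qed.

Lemma sumI_delta n (k : 'I_n) F : sumI (fun l => if l == k then F l else 0) = F k.
Proof. by rewrite sumI_lsum lsum_delta ?enum_uniq // mem_enum. Qed.

Lemma lsum_derivable T (s : seq T) (F : T -> R -> R) dF t0 :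
  (forall l, derivable_pt_lim (F l) t0 (dF l)) ->
  derivable_pt_lim (fun t => lsum s (fun l => F l t)) t0 (lsum s dF).
Proof.
move=> hF; elim: s => /= [|a s IH]; first exact: derivable_pt_lim_const.
exact: (derivable_pt_lim_plus _ _ _ _ _ (hF a) IH).
Qed.

Lemma mulmv_scaled_product m r n (A : 'I_m -> 'I_r -> R) (B : 'I_r -> 'I_n -> R)
    kappa lambda v :
  mulmv (mulmm (scalecols A kappa) (scalecols B lambda)) v =
  mulmv A (fun j => kappa j * mulmv B (fun k => lambda k * v k) j).
Proof.
apply: functional_extensionality => i; rewrite /mulmv /mulmm /scalecols !sumI_lsum.
rewrite (@lsum_ext _ _ _ (fun k => lsum (enum 'I_r)
            (fun j => A i j * kappa j * (B j k * lambda k) * v k))); last first.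
  by move=> k; rewrite lsum_mulr.
rewrite lsum_swap; apply: lsum_ext => j.
by rewrite -!lsum_mull; apply: lsum_ext => k; ring.
Qed.

Lemma fk_diff m r n (A : 'I_m -> 'I_r -> R) (B : 'I_r -> 'I_n -> R) kappa x y i :
  fk A B kappa x i - fk A B kappa y i =
  mulmv A (fun j => kappa j * (monomials B x j - monomials B y j)) i.
Proof. by rewrite /fk /mulmv /scalecols !sumI_lsum -lsum_sub; apply: lsum_ext => l; ring. Qed.

Lemma prod_exp_lsum T (s : seq T) F :
  foldr (fun i acc => exp (F i) * acc) 1 s = exp (lsum s F).
Proof. by elim: s => /= [|a s ->]; rewrite ?exp_0 ?exp_plus. Qed.

Lemma monomials_exp r n (B : 'I_r -> 'I_n -> R) x j :
  monomials B x j = exp (mulmv B (fun l => ln (x l)) j).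
Proof. by rewrite /monomials /prodI /Rpower prod_exp_lsum. Qed.

Lemma monomials_pos r n (B : 'I_r -> 'I_n -> R) x j : 0 < monomials B x j.
Proof. by rewrite monomials_exp; apply: exp_pos. Qed.

Lemma sgnR_monomials_diff r n (B : 'I_r -> 'I_n -> R) x y j :
  sgnR (monomials B x j - monomials B y j) =
  sgnR (mulmv B (fun l => ln (x l) - ln (y l)) j).
Proof.
rewrite !monomials_exp sgnR_exp_diff /mulmv !sumI_lsum -lsum_sub.
by congr sgnR; apply: lsum_ext => l; ring.
Qed.

Lemma upd_same n (x : 'I_n -> R) k : upd x k (x k) = x.
Proof. by apply: functional_extensionality => l; rewrite /upd; case: eqP => [->|]. Qed.

Lemma monomials_partial r n (B : 'I_r -> 'I_n -> R) x j k : posvec x ->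
  derivable_pt_lim (fun t => monomials B (upd x k t) j) (x k)
                   (monomials B x j * (B j k * / x k)).
Proof.
move=> hx.
have hlog : derivable_pt_lim (fun t => mulmv B (fun l => ln (upd x k t l)) j) (x k)
              (sumI (fun l => if l == k then B j l * / x k else 0)).
{ apply: lsum_derivable => l; rewrite /upd; case: (l == k).
  - exact: derivable_pt_lim_scal (derivable_pt_lim_ln _ (hx k)).
  - exact: derivable_pt_lim_const. }
have := derivable_pt_lim_comp _ exp _ _ _ hlog (derivable_pt_lim_exp _).
rewrite upd_same sumI_delta -monomials_exp.
by apply: derivable_pt_lim_ext => t; rewrite /comp monomials_exp.
Qed.

Definition jacobian_fk m r n (A : 'I_m -> 'I_r -> R) (B : 'I_r -> 'I_n -> R) kappa x :=
  mulmm (scalecols A (fun j => kappa j * monomials B x j)) (scalecols B (fun k => / x k)).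

Lemma is_jacobian_fk m r n (A : 'I_m -> 'I_r -> R) (B : 'I_r -> 'I_n -> R) kappa x :
  posvec x -> is_jacobian (fk A B kappa) x (jacobian_fk A B kappa x).
Proof.
move=> hx i k; rewrite /fk /mulmv /jacobian_fk /mulmm /scalecols.
have -> : sumI (fun j => A i j * (kappa j * monomials B x j) * (B j k * / x k)) =
          lsum (enum 'I_r) (fun j => A i j * kappa j * (monomials B x j * (B j k * / x k))).
  by rewrite sumI_lsum; apply: lsum_ext => j; ring.
apply: lsum_derivable => j.
exact: (derivable_pt_lim_scal _ (A i j * kappa j) _ _ (monomials_partial B j k hx)).
Qed.

Lemma is_jacobian_unique m n (g : ('I_n -> R) -> ('I_m -> R)) x J1 J2 :
  is_jacobian g x J1 -> is_jacobian g x J2 -> J1 = J2.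
Proof.
move=> h1 h2; apply: functional_extensionality => i.
apply: functional_extensionality => k; exact: uniqueness_limite (h1 i k) (h2 i k).
Qed.

Definition sign_witness m r n (A : 'I_m -> 'I_r -> R) (B : 'I_r -> 'I_n -> R)
    (S : ('I_n -> R) -> Prop) (u : 'I_r -> R) (v w : 'I_n -> R) : Prop :=
  mulmv A u = @zerov m /\ nonzero_part S w /\
  signvec v = signvec w /\ signvec (mulmv B v) = signvec u.

Lemma sig_fails_iff m r n (A : 'I_m -> 'I_r -> R) (B : 'I_r -> 'I_n -> R) S :
  (exists s : 'I_r -> comparison,
     (exists u, mulmv A u = (@zerov m) /\ signvec u = s) /\
     (exists v, Sigma_set (nonzero_part S) v /\ signvec (mulmv B v) = s)) <->
  exists u v w, sign_witness A B S u v w.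
Proof.
split.
- move=> [_ [[u [hu <-]] [v [[w [hw hvw]] hBv]]]]; by exists u, v, w.
- move=> [u [v [w [hu [hw [hvw hBv]]]]]].
  by exists (signvec u); split; [exists u | exists v; split => //; exists w].
Qed.

Lemma sign_witness_of_lin_kernel m r n (A : 'I_m -> 'I_r -> R) (B : 'I_r -> 'I_n -> R)
    S kappa lambda w :
  posvec kappa -> posvec lambda -> nonzero_part S w ->
  mulmv (mulmm (scalecols A kappa) (scalecols B lambda)) w = @zerov m ->
  sign_witness A B S (fun j => kappa j * mulmv B (fun k => lambda k * w k) j)
                     (fun k => lambda k * w k) w.
Proof.
move=> hk hl hw hker; split; last split; last split.
- by rewrite -mulmv_scaled_product.
- exact: hw.
- exact: signvec_scale_pos.
- by rewrite signvec_scale_pos.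
Qed.

(* Conversely, rescaling a sign witness by positive diagonals puts w into the
   kernel of some A_kappa B_lambda. *)
Lemma lin_kernel_of_sign_witness m r n (A : 'I_m -> 'I_r -> R) (B : 'I_r -> 'I_n -> R)
    S u v w :
  sign_witness A B S u v w -> exists kappa lambda, posvec kappa /\ posvec lambda /\
  mulmv (mulmm (scalecols A kappa) (scalecols B lambda)) w = @zerov m.
Proof.
move=> [hu [hw [hvw hBv]]].
have [lambda [hl hlw]] := signvec_eq_scale (esym hvw).
have [kappa [hk hkBv]] := signvec_eq_scale hBv.
exists kappa, lambda; split => //; split => //.
by rewrite mulmv_scaled_product hlw hkBv.
Qed.

Lemma lin_iff_no_witness m r n (A : 'I_m -> 'I_r -> R) (B : 'I_r -> 'I_n -> R) S :
  (forall kappa lambda, posvec kappa -> posvec lambda ->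
     ker_avoids (mulmm (scalecols A kappa) (scalecols B lambda)) S) <->
  ~ exists u v w, sign_witness A B S u v w.
Proof.
split.
- move=> hlin [u [v [w hwit]]].
  have [kappa [lambda [hk [hl hker]]]] := lin_kernel_of_sign_witness hwit.
  by case: (hwit) => _ [[hS hw0] _]; apply: (hlin kappa lambda hk hl w hS hw0).
- move=> hnone kappa lambda hk hl w hS hw0 hker; apply: hnone.
  by do 3 eexists; apply: sign_witness_of_lin_kernel hker.
Qed.

Lemma sign_witness_of_collision m r n (A : 'I_m -> 'I_r -> R) (B : 'I_r -> 'I_n -> R)
    S kappa x y :
  posvec kappa -> posvec x -> posvec y -> x <> y -> S (subv x y) ->
  fk A B kappa x = fk A B kappa y ->
  sign_witness A B S (fun j => kappa j * (monomials B x j - monomials B y j))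
                     (fun l => ln (x l) - ln (y l)) (subv x y).
Proof.
move=> hk hx hy hxy hS hf; split; last split; last split.
- apply: functional_extensionality => i.
  by rewrite -fk_diff hf /zerov; ring.
- split => // e; apply: hxy; apply: functional_extensionality => i.
  by have := f_equal (fun z => z i) e; rewrite /subv /zerov; lra.
- by apply: functional_extensionality => l; rewrite /signvec sgnR_ln_diff.
- apply: functional_extensionality => j.
  by rewrite /signvec sgnR_scale_pos // sgnR_monomials_diff.
Qed.

(* Conversely, realise (w, v) as (x - y, ln x - ln y); then x^B - y^B has the
   sign vector of u, and a positive kappa rescales it to u, giving a collision. *)
Lemma collision_of_sign_witness m r n (A : 'I_m -> 'I_r -> R) (B : 'I_r -> 'I_n -> R)
    S u v w :
  sign_witness A B S u v w -> exists kappa x y, posvec kappa /\ posvec x /\ posvec y /\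
  x <> y /\ S (subv x y) /\ fk A B kappa x = fk A B kappa y.
Proof.
move=> [hu [[hS hw0] [hvw hBv]]].
have [x [y [hx [hy [hxy hlog]]]]] := signvec_eq_log_pair (esym hvw).
have hdiff : signvec (fun j => monomials B x j - monomials B y j) = signvec u.
{ rewrite -hBv -hlog; apply: functional_extensionality => j.
  exact: sgnR_monomials_diff. }
have [kappa [hk hku]] := signvec_eq_scale hdiff.
exists kappa, x, y; do 3 (split => //); split; last split.
- by move=> e; apply: hw0; rewrite -hxy e; apply: functional_extensionality => i;
     rewrite /subv /zerov; ring.
- by rewrite hxy.
- apply: functional_extensionality => i; apply: Rminus_diag_uniq.
  by rewrite fk_diff hku hu.
Qed.

Lemma inj_iff_no_witness m r n (A : 'I_m -> 'I_r -> R) (B : 'I_r -> 'I_n -> R) S :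
  (forall kappa, posvec kappa -> injective_wrt (fk A B kappa) S) <->
  ~ exists u v w, sign_witness A B S u v w.
Proof.
split.
- move=> hinj [u [v [w hwit]]].
  have [kappa [x [y [hk [hx [hy [hxy [hS hf]]]]]]]] := collision_of_sign_witness hwit.
  exact: (hinj kappa hk x y hx hy hxy hS hf).
- move=> hnone kappa hk x y hx hy hxy hS hf; apply: hnone.
  by do 3 eexists; apply: sign_witness_of_collision hf.
Qed.

(* (jac) <-> (lin): the Jacobian at x for rate kappa is A_{kappa'} B_{lambda} with
   kappa' = kappa o x^B, lambda = 1/x, and every positive pair (kappa', lambda)
   arises this way (x = 1/lambda, kappa = kappa' / x^B). *)
Lemma jac_iff_lin m r n (A : 'I_m -> 'I_r -> R) (B : 'I_r -> 'I_n -> R) S :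
  (forall kappa x J, posvec kappa -> posvec x ->
     is_jacobian (fk A B kappa) x J -> ker_avoids J S) <->
  (forall kappa lambda, posvec kappa -> posvec lambda ->
     ker_avoids (mulmm (scalecols A kappa) (scalecols B lambda)) S).
Proof.
split.
- move=> hjac kappa lambda hk hl.
  pose x k := / lambda k.
  have hx : posvec x by move=> k; apply: Rinv_0_lt_compat.
  pose kappa' j := kappa j / monomials B x j.
  have hk' : posvec kappa' by move=> j; apply: Rdiv_lt_0_compat; [apply: hk | apply: monomials_pos].
  have hker := hjac kappa' x _ hk' hx (is_jacobian_fk A B kappa' hx).
  have ekappa : (fun j => kappa' j * monomials B x j) = kappa.
  { apply: functional_extensionality => j; rewrite /kappa'; field.
    exact: Rgt_not_eq (monomials_pos B x j). }
  have elambda : (fun k => / x k) = lambda.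
  { by apply: functional_extensionality => k; rewrite /x Rinv_inv. }
  by rewrite /jacobian_fk ekappa elambda in hker.
- move=> hlin kappa x J hk hx hJ.
  rewrite (is_jacobian_unique hJ (is_jacobian_fk A B kappa hx)).
  apply: hlin => j; last exact: Rinv_0_lt_compat.
  by apply: Rmult_lt_0_compat; [apply: hk | apply: monomials_pos].
Qed.

Theorem theorem1 (m r n : nat) (A : 'I_m -> 'I_r -> R) (B : 'I_r -> 'I_n -> R)
  (S : ('I_n -> R) -> Prop) :
  let inj := forall kappa, posvec kappa -> injective_wrt (fk A B kappa) S in
  let jac := forall kappa x J, posvec kappa -> posvec x ->
               is_jacobian (fk A B kappa) x J -> ker_avoids J S in
  let lin := forall kappa lambda, posvec kappa -> posvec lambda ->
               ker_avoids (mulmm (scalecols A kappa) (scalecols B lambda)) S in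
  let sig := ~ (exists s : 'I_r -> comparison,
                 (exists u, mulmv A u = (@zerov m) /\ signvec u = s) /\
                 (exists v, Sigma_set (nonzero_part S) v /\ signvec (mulmv B v) = s)) in
  (inj <-> jac) /\ (jac <-> lin) /\ (lin <-> sig).
Proof.
move=> inj jac lin sig.
have jac_lin : jac <-> lin := jac_iff_lin A B S.
have lin_sig : lin <-> sig.
{ by rewrite /lin /sig lin_iff_no_witness sig_fails_iff. }
have inj_sig : inj <-> sig.
{ by rewrite /inj /sig inj_iff_no_witness sig_fails_iff. }
split; [|split] => //.
by rewrite inj_sig -lin_sig jac_lin.
Qed.
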